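(* Let $R$ be a ring and $\mathcal{L}$ a class of left $R$-modules containing $0$. Then $\mathscr{C}^-(\mathcal{L})\subseteq dg\widetilde{\mathcal{L}}$.
   Context: Complexes are homologically indexed; a complex $X$ is bounded below if there is $b$ with $X_n=0$ for all $n\le b$. $\mathscr{C}^-(\mathcal{L})$ is the class of bounded below complexes with all terms in $\mathcal{L}$. For modules, $\underline{\mathfrak{Pr}}^{-1}_{R\text{-Mod}}(\mathcal{L})$ is the class of modules $N$ such that for every $L\in\mathcal{L}$, every morphism $L\to N$ factors through a projective module. For complexes $X,Y$, $\mathrm{Hom}^\bullet(X,Y)$ is the complex of abelian groups with $\mathrm{Hom}^\bullet(X,Y)_n=\prod_i\mathrm{Hom}_R(X_i,Y_{i+n})$ and differential $\psi\mapsto(d^Y_{i+n}\psi_i-(-1)^n\psi_{i-1}d^X_i)_i$. A complex $X$ is a $dg\mathcal{L}$ complex if $X_n\in\mathcal{L}$ for all $n$ and $\mathrm{Hom}^\bullet(X,G)$ is exact for every exact complex $G$ all of whose cycles $\mathrm{Ker}\,d_n^G$ lie in $\underline{\mathfrak{Pr}}^{-1}_{R\text{-Mod}}(\mathcal{L})$; $dg\widetilde{\mathcal{L}}$ is the class of $dg\mathcal{L}$ complexes. *)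

From HB Require Import structures.
From mathcomp Require Import all_boot all_order all_algebra.
Set Implicit Arguments. Unset Strict Implicit. Unset Printing Implicit Defensive.
Import Order.TTheory GRing.Theory Num.Theory.
Local Open Scope ring_scope.

Section Kernel.
Variables (R : pzRingType) (U V : lmodType R) (f : {linear U -> V}).

Definition kerp : pred U := fun x => f x == 0.

Lemma kerp_closed : subsemimod_closed kerp.
Proof.
split; first split.
- by rewrite unfold_in /kerp /= linear0.
- by move=> x y; rewrite !unfold_in /kerp /= linearD => /eqP -> /eqP ->; rewrite addr0.
- by move=> a x; rewrite !unfold_in /kerp /= => /eqP fx0; rewrite linearZZ fx0 scaler0.
Qed.

Record kerT := KerT { kval : U; kvalP : kerp kval }.
HB.instance Definition _ := [isSub for kval].
HB.instance Definition _ := [Choice of kerT by <:].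
HB.instance Definition _ := GRing.SubChoice_isSubLmodule.Build R U kerp kerT kerp_closed.

End Kernel.

Section Complexes.
Variable R : pzRingType.

Record complex := Complex {
  cobj :> int -> lmodType R;
  cdif : forall n : int, {linear cobj n -> cobj (n - 1)};
  cdd : forall (n : int) (x : cobj n), cdif (n - 1) (cdif n x) = 0 }.

Definition tr (X : int -> lmodType R) (a b : int) (e : a = b) (x : X a) : X b :=
  match e in _ = c return X c with erefl => x end.

Lemma idx_succ_pred (n : int) : n + 1 - 1 = n.
Proof. by rewrite addrK. Qed.
Lemma idx_hom1 (i m : int) : i - 1 + m = i + m - 1.
Proof. by rewrite addrAC. Qed.
Lemma idx_hom2 (i n : int) : i + (n + 1) - 1 = i + n.
Proof. by rewrite addrA addrK. Qed.

Definition projective (P : lmodType R) : Prop :=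
  forall (M N : lmodType R) (g : {linear M -> N}) (f : {linear P -> N}),
    (forall y : N, exists x : M, g x = y) ->
    exists h : {linear P -> M}, forall p : P, g (h p) = f p.

Definition factors_through_projective (A N : lmodType R) (f : {linear A -> N}) : Prop :=
  exists P : lmodType R, projective P /\
    exists (h : {linear A -> P}) (g : {linear P -> N}), forall x : A, f x = g (h x).

Definition PrInv (L : lmodType R -> Prop) (N : lmodType R) : Prop :=
  forall A : lmodType R, L A -> forall f : {linear A -> N}, factors_through_projective f.

(* exact complex: Ker d_n = Im d_{n+1} (Im is always in Ker since d d = 0) *)
Definition exact_complex (G : complex) : Prop :=
  forall (n : int) (y : G n), cdif G n y = 0 ->
    exists z : G (n + 1), tr (idx_succ_pred n) (cdif G (n + 1) z) = y.

Definition cycles (G : complex) (n : int) : lmodType R := kerT (cdif G n).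

Definition sgn (n : int) (M : lmodType R) (v : M) : M :=
  if odd (absz n) then - v else v.

Definition homdeg (X Y : complex) (n : int) :=
  forall i : int, {linear X i -> Y (i + n)}.

Definition hom_d (X Y : complex) (n : int) (psi : homdeg X Y n) (i : int) (x : X i)
  : Y (i + n - 1) :=
  cdif Y (i + n) (psi i x)
  - sgn n (tr (idx_hom1 i n) (psi (i - 1) (cdif X i x))).

Definition hom_exact (X Y : complex) : Prop :=
  forall (n : int) (psi : homdeg X Y n),
    (forall (i : int) (x : X i), hom_d psi x = 0) ->
    exists phi : homdeg X Y (n + 1),
      forall (i : int) (x : X i), tr (idx_hom2 i n) (hom_d phi x) = psi i x.

Definition bounded_below (X : complex) : Prop :=
  exists b : int, forall n : int, n <= b -> forall x : X n, x = 0.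

Definition in_Cminus (L : lmodType R -> Prop) (X : complex) : Prop :=
  bounded_below X /\ forall n : int, L (X n).

Definition dg_complex (L : lmodType R -> Prop) (X : complex) : Prop :=
  (forall n : int, L (X n)) /\
  forall G : complex, exact_complex G ->
    (forall n : int, PrInv L (cycles G n)) -> hom_exact X G.

End Complexes.

From HB Require Import structures.
From mathcomp Require Import all_boot all_order all_algebra.
From mathcomp Require Import ring zify.
From Stdlib Require Import ClassicalEpsilon.
Set Implicit Arguments. Unset Strict Implicit. Unset Printing Implicit Defensive.
Import Order.TTheory GRing.Theory Num.Theory.
Local Open Scope ring_scope.

(* Let psi be a cycle of degree n in Hom(X, G).  A preimage phi under the differential
   is built one component at a time, upwards from the degree b below which X vanishes.
   If d phi = psi already holds in degree j - 1, the obstruction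
   psi_j - (-1)^n phi_(j-1) d_j : X_j -> G_(j+n) takes values in the cycles Z_(j+n)(G).
   As X_j is in L and Z_(j+n)(G) is in PrInv(L), it factors through a projective module,
   hence lifts along the surjection G_(j+n+1) -> Z_(j+n)(G); the lift is phi_j. *)

Section Transport.
Variable R : pzRingType.
Implicit Types (F : int -> lmodType R) (M : lmodType R).

Lemma tr_is_linear F a b (e : a = b) : linear (tr (X := F) e).
Proof. by case: b / e. Qed.
HB.instance Definition _ F a b (e : a = b) :=
  GRing.isLinear.Build R (F a) (F b) _ (tr e) (tr_is_linear e).

Lemma tr_id F a (e : a = a) (x : F a) : tr e x = x.
Proof. by rewrite (eq_irrelevance e erefl). Qed.

Lemma tr_irr F a b (e e' : a = b) (x : F a) : tr e x = tr e' x.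
Proof. by rewrite (eq_irrelevance e e'). Qed.

Lemma tr_comp F a b c (e1 : a = b) (e2 : b = c) (x : F a) :
  tr e2 (tr e1 x) = tr (etrans e1 e2) x.
Proof. by case: c / e2. Qed.

Lemma tr_sgn F a b (e : a = b) m (x : F a) : tr e (sgn m x) = sgn m (tr e x).
Proof. by case: b / e. Qed.

Lemma sgn_is_linear m M : linear (@sgn R m M).
Proof. by move=> c x y; rewrite /sgn; case: ifP => // _; rewrite opprD scalerN. Qed.
HB.instance Definition _ m M :=
  GRing.isLinear.Build R M M _ (@sgn R m M) (@sgn_is_linear m M).

Lemma linear_sgn m (M N : lmodType R) (f : {linear M -> N}) (x : M) :
  f (sgn m x) = sgn m (f x).
Proof. by rewrite /sgn; case: ifP => _ //; rewrite linearN. Qed.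

Lemma sgnS m M (x : M) : sgn (m + 1) x = - sgn m x.
Proof.
rewrite /sgn; case: m => [k|[|k]] /=.
- by rewrite addn1 /=; case: (odd k); rewrite ?opprK.
- by rewrite opprK.
- by rewrite subn1 /= negbK; case: (odd k); rewrite ?opprK.
Qed.

Lemma cdif_tr (G : complex R) a b (e : a = b) (e' : a - 1 = b - 1) (x : G a) :
  cdif G b (tr e x) = tr e' (cdif G a x).
Proof. by move: e'; case: b / e => e'; rewrite (tr_id (F := cobj G) e'). Qed.

Lemma exact_complex_boundary (G : complex R) (Gex : exact_complex G) a b
    (e : a - 1 = b) (y : G b) :
  cdif G b y = 0 -> exists z : G a, tr e (cdif G a z) = y.
Proof.
have ea : a = b + 1 by rewrite -e subrK.
subst a.
by move=> /Gex [z zy]; exists z; rewrite (tr_irr _ (idx_succ_pred b)).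
Qed.

End Transport.

Section Lifting.
Variable R : pzRingType.

Lemma lift_along_surjection (A M N : lmodType R) (g : {linear A -> N})
    (f : {linear M -> N}) :
  (forall y, exists x, g x = y) -> factors_through_projective f ->
  exists h : {linear M -> A}, forall m, g (h m) = f m.
Proof.
move=> g_onto [P [P_proj [s [p fE]]]].
have [k kE] := P_proj A N g p g_onto.
by exists (k \o s : {linear _ -> _}) => m /=; rewrite kE fE.
Qed.

Section Corestriction.
Variables (U V W : lmodType R) (f : {linear U -> V}) (g : {linear W -> U}).
Hypothesis fg0 : forall w, f (g w) = 0.

Definition ker_corestr (w : W) : kerT f := KerT (introT eqP (fg0 w)).

Lemma ker_corestr_is_linear : linear ker_corestr.
Proof. by move=> a x y; apply: val_inj; rewrite /= linearP. Qed.
HB.instance Definition _ :=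
  GRing.isLinear.Build R W (kerT f) _ ker_corestr ker_corestr_is_linear.

End Corestriction.

Lemma lift_cycle_to_boundary (M A B C : lmodType R) (dA : {linear A -> B})
    (dB : {linear B -> C}) (dBA : forall a, dB (dA a) = 0) :
  (forall y, dB y = 0 -> exists a, dA a = y) ->
  (forall f : {linear M -> kerT dB}, factors_through_projective f) ->
  forall th : {linear M -> B}, (forall x, dB (th x) = 0) ->
  exists q : {linear M -> A}, forall x, dA (q x) = th x.
Proof.
move=> exactB factors th thK.
have onto (y : kerT dB) : exists a, ker_corestr dBA a = y.
  have [a aE] := exactB (val y) (eqP (kvalP y)).
  by exists a; apply: val_inj.
have [q qE] := lift_along_surjection onto (factors (ker_corestr thK : {linear _ -> _})).
by exists q => x; have /(congr1 val) := qE x.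
Qed.

End Lifting.

Section NullHomotopy.
Variables (R : pzRingType) (L : lmodType R -> Prop) (X G : complex R) (n : int).
Variable psi : homdeg X G n.

Definition solves_at (phi : homdeg X G (n + 1)) (i : int) :=
  forall x : X i, tr (idx_hom2 i n) (hom_d phi x) = psi i x.

Lemma solves_at_ext (phi phi' : homdeg X G (n + 1)) i :
  phi i = phi' i -> phi (i - 1) = phi' (i - 1) -> solves_at phi i -> solves_at phi' i.
Proof. by rewrite /solves_at /hom_d => -> ->. Qed.

Lemma solves_at_trivial (phi : homdeg X G (n + 1)) i :
  (forall x : X i, x = 0) -> solves_at phi i.
Proof. by move=> X0 x; rewrite (X0 x) /hom_d !linear0 addr0 linear0. Qed.

Lemma solves_at_boundary (phi : homdeg X G (n + 1)) j (x : X j) :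
  solves_at phi (j - 1) ->
  tr (idx_hom2 (j - 1) n) (cdif G _ (phi (j - 1) (cdif X j x))) = psi (j - 1) (cdif X j x).
Proof. by move=> /(_ (cdif X j x)); rewrite /hom_d cdd !linear0 addr0. Qed.

Definition homdeg_upd m (phi : homdeg X G m) j (q : {linear X j -> G (j + m)}) :
    homdeg X G m :=
  fun i => match j =P i with
  | ReflectT e => match e in _ = c return {linear X c -> G (c + m)} with erefl => q end
  | ReflectF _ => phi i
  end.

Lemma homdeg_upd_eq m (phi : homdeg X G m) j (q : {linear X j -> G (j + m)}) :
  homdeg_upd phi q j = q.
Proof. by rewrite /homdeg_upd; case: eqP => // e; rewrite (eq_irrelevance e erefl). Qed.

Lemma homdeg_upd_ne m (phi : homdeg X G m) j (q : {linear X j -> G (j + m)}) i :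
  j != i -> homdeg_upd phi q i = phi i.
Proof. by rewrite /homdeg_upd; case: eqP. Qed.

Hypothesis psi_cycle : forall i (x : X i), hom_d psi x = 0.
Hypothesis G_exact : exact_complex G.
Hypothesis G_cycles : forall m, PrInv L (cycles G m).

Lemma solves_at_upd (phi : homdeg X G (n + 1)) j :
  L (X j) -> solves_at phi (j - 1) ->
  exists q : {linear X j -> G (j + (n + 1))}, solves_at (homdeg_upd phi q) j.
Proof.
move=> LXj phiS.
have e_prev : j - 1 + (n + 1) = j + n by ring.
pose th : {linear X j -> G (j + n)} :=
  psi j \- (@sgn R n _ \o tr e_prev \o phi (j - 1) \o cdif X j).
pose dA : {linear G (j + (n + 1)) -> G (j + n)} := tr (idx_hom2 j n) \o cdif G _.
have dBA z : cdif G (j + n) (dA z) = 0.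
  have e_dd : j + (n + 1) - 1 - 1 = j + n - 1 by ring.
  by rewrite /dA /= (cdif_tr _ e_dd) cdd linear0.
have thK x : cdif G (j + n) (th x) = 0.
  have e_d : j - 1 + (n + 1) - 1 = j + n - 1 by ring.
  rewrite /th /= linearB linear_sgn (cdif_tr _ e_d).
  have /eqP := psi_cycle x; rewrite /hom_d subr_eq0 => /eqP ->.
  by rewrite -(solves_at_boundary x phiS) tr_comp (tr_irr _ e_d) subrr.
have [q qE] := lift_cycle_to_boundary dBA (exact_complex_boundary G_exact (idx_hom2 j n))
  (G_cycles LXj) thK.
exists q => x; rewrite /hom_d homdeg_upd_eq homdeg_upd_ne; last by apply/eqP; lia.
rewrite linearB /=; have -> : tr (idx_hom2 j n) (cdif G _ (q x)) = th x := qE x.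
by rewrite tr_sgn sgnS tr_comp (tr_irr _ e_prev) opprK subrK.
Qed.

Variable b : int.
Hypothesis X_bounded : forall i, i <= b -> forall x : X i, x = 0.
Hypothesis X_in_L : forall i, L (X i).

Definition extend (phi : homdeg X G (n + 1)) j : homdeg X G (n + 1) :=
  homdeg_upd phi (epsilon (inhabits (\0 : {linear X j -> G (j + (n + 1))}))
                          (fun q => solves_at (homdeg_upd phi q) j)).

Lemma extend_solves phi j :
  solves_at phi (j - 1) -> solves_at (extend phi j) j.
Proof.
move=> phiS.
exact: (epsilon_spec _ (fun q => solves_at (homdeg_upd phi q) j)
                     (solves_at_upd (X_in_L j) phiS)).
Qed.

Fixpoint stage (k : nat) : homdeg X G (n + 1) :=
  if k is k'.+1 then extend (stage k') (b + k) else fun i => \0.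

Lemma stage_succ k i : i <= b + k%:Z -> stage k.+1 i = stage k i.
Proof. by move=> ik; rewrite /= /extend homdeg_upd_ne //; apply/eqP; lia. Qed.

Lemma stage_stable k m i : (k <= m)%N -> i <= b + k%:Z -> stage m i = stage k i.
Proof.
move=> /subnK <- ik; elim: (m - k)%N => [|d IH] //.
by rewrite addSn stage_succ ?IH //; lia.
Qed.

Lemma stage_coherent k m i : i <= b + k%:Z -> i <= b + m%:Z -> stage k i = stage m i.
Proof.
have [km|/ltnW mk] := leqP k m => ik im; first by rewrite (stage_stable km).
by rewrite (stage_stable mk).
Qed.

Lemma stage_solves k i : i <= b + k%:Z -> solves_at (stage k) i.
Proof.
elim: k i => [|k IH] i ik; first by apply/solves_at_trivial/X_bounded; lia.
have [ik'|ik'] := lerP i (b + k%:Z).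
  by apply: (solves_at_ext _ _ (IH i ik')); rewrite stage_succ //; lia.
have -> : i = b + k.+1%:Z by lia.
by apply: extend_solves; apply: IH; lia.
Qed.

End NullHomotopy.

Theorem lemma3p5 (R : pzRingType) (L : lmodType R -> Prop)
  (L0 : exists Z : lmodType R, L Z /\ forall z : Z, z = 0) :
  forall X : complex R, in_Cminus L X -> dg_complex L X.
Proof.
move=> X [[b X_bounded] X_in_L]; split=> // G G_exact G_cycles n psi psi_cycle.
pose phi i := stage psi b `|i - b|%N i.
exists phi => i.
have i_le : i <= b + `|i - b|%N by lia.
have := stage_solves psi_cycle G_exact G_cycles X_bounded X_in_L i_le.
by apply: solves_at_ext => //; apply: stage_coherent; lia.
Qed.
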